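(* For every Bochvar algebra $\mathbf{A}$, the Bochvar algebra $\mathbf{A}_{\mathbb{B}_{\mathbf{A}}}$ is isomorphic to $\mathbf{A}$.
   Context: $\mathbf{WK}^e$ is the three-element algebra on $\{0,\tfrac12,1\}$ of type $\langle\wedge,\vee,\neg,J_2,0,1\rangle$. Its operations are: - $\neg$ swaps $0,1$ and fixes $\tfrac12$; - $\wedge,\vee$ are Boolean on $\{0,1\}$ and return $\tfrac12$ if some argument is $\tfrac12$; - $J_2(1)=1$ and $J_2(\tfrac12)=J_2(0)=0$. Bochvar algebras are the members of $ISP(\mathbf{WK}^e)$. The $\{\wedge,\vee,\neg,0,1\}$-reduct of a Bochvar algebra is canonically a Płonka sum of Boolean algebras $\mathbf{A}_i$ over a join-semilattice $\langle I,\vee,i_0\rangle$, with bottom fibre $\mathbf{A}_{i_0}$. A Bochvar system is a pair $\langle\mathbf{B},\mathbf{I}\rangle$ with $\mathbf{B}$ a Boolean algebra and $I\subseteq B$ containing $1$ and closed under $\wedge$. $\mathbb{B}_{\mathbf{A}}$ is the Bochvar system $\langle\mathbf{A}_{i_0},K\rangle$ with $K=\{J_2(1^{A_i}):i\in I\}$, where $1^{A_i}$ is the top of fibre $\mathbf{A}_i$. For a Bochvar system $\mathbb{B}=\langle\mathbf{B},\mathbf{I}\rangle$, $\mathbf{A}_{\mathbb{B}}$ is the unique Bochvar algebra whose $\{\wedge,\vee,\neg,0,1\}$-reduct is the Płonka sum of the following system: - index semilattice $I$ ordered dually to $\mathbf{B}$ (least element $1$); - fibres $\mathbf{B}/[i)$,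 the quotient by the congruence of the principal filter $[i)$; - maps $p_{ij}(a/[i))=a/[j)$. Its $J_2$ sends $a/[i)$ to the unique element of the bottom fibre $\mathbf{B}/[1)\cong\mathbf{B}$ below $i$ that is congruent to $a$ modulo $[i)$. *)

From Stdlib Require Import FunctionalExtensionality ProofIrrelevance.
Set Implicit Arguments.

Record alg := Alg {
  car :> Type;
  meet : car -> car -> car;
  join : car -> car -> car;
  neg : car -> car;
  j2 : car -> car;
  zero : car;
  one : car }.
Arguments meet {a}. Arguments join {a}. Arguments neg {a}.
Arguments j2 {a}. Arguments zero {a}. Arguments one {a}.

Record hom (A B : alg) (f : A -> B) : Prop := Hom {
  hom_meet : forall a b, f (meet a b) = meet (f a) (f b);
  hom_join : forall a b, f (join a b) = join (f a) (f b);
  hom_neg : forall a, f (neg a) = neg (f a);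
  hom_j2 : forall a, f (j2 a) = j2 (f a);
  hom_zero : f zero = zero;
  hom_one : f one = one }.

Definition isomorphic (A B : alg) : Prop :=
  exists f : A -> B, @hom A B f /\ (forall x y, f x = f y -> x = y)
                            /\ (forall y, exists x, f x = y).

Inductive wk := W0 | Wh | W1.   (* Wh stands for 1/2 *)

Definition wmeet (a b : wk) : wk :=
  match a, b with
  | Wh, _ | _, Wh => Wh
  | W1, W1 => W1
  | _, _ => W0 end.
Definition wjoin (a b : wk) : wk :=
  match a, b with
  | Wh, _ | _, Wh => Wh
  | W0, W0 => W0
  | _, _ => W1 end.
Definition wneg (a : wk) : wk :=
  match a with W0 => W1 | Wh => Wh | W1 => W0 end.
Definition wj2 (a : wk) : wk :=
  match a with W1 => W1 | _ => W0 end.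

Definition WKe : alg := Alg wmeet wjoin wneg wj2 W0 W1.

Definition pow (X : Type) (A : alg) : alg :=
  @Alg (X -> A) (fun f g x => meet (f x) (g x)) (fun f g x => join (f x) (g x))
       (fun f x => neg (f x)) (fun f x => j2 (f x))
       (fun _ => zero) (fun _ => one).

(* Bochvar algebras = ISP(WK^e): algebras embeddable in a power of WK^e *)
Definition bochvar (A : alg) : Prop :=
  exists (X : Type) (h : A -> pow X WKe),
    @hom A (pow X WKe) h /\ (forall a b, h a = h b -> a = b).

Record BA := MkBA {
  bcar :> Type;
  bmeet : bcar -> bcar -> bcar;
  bjoin : bcar -> bcar -> bcar;
  bneg : bcar -> bcar;
  b0 : bcar;
  b1 : bcar;
  bmeetC : forall a b, bmeet a b = bmeet b a;
  bjoinC : forall a b, bjoin a b = bjoin b a;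
  bmeetA : forall a b c, bmeet a (bmeet b c) = bmeet (bmeet a b) c;
  bjoinA : forall a b c, bjoin a (bjoin b c) = bjoin (bjoin a b) c;
  babs1 : forall a b, bmeet a (bjoin a b) = a;
  babs2 : forall a b, bjoin a (bmeet a b) = a;
  bdistr : forall a b c, bmeet a (bjoin b c) = bjoin (bmeet a b) (bmeet a c);
  bmeet1 : forall a, bmeet a b1 = a;
  bjoin0 : forall a, bjoin a b0 = a;
  bcomplm : forall a, bmeet a (bneg a) = b0;
  bcomplj : forall a, bjoin a (bneg a) = b1 }.
Arguments bmeet {_} _ _. Arguments bjoin {_} _ _. Arguments bneg {_} _.
Arguments b0 {_}. Arguments b1 {_}.

Record bsys := MkBsys {
  sB : BA;
  sI : sB -> Prop;
  sI1 : sI b1;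
  sImeet : forall i j, sI i -> sI j -> sI (bmeet i j) }.

Lemma bmeet_idem (B : BA) (a : B) : bmeet a a = a.
Proof.
  transitivity (bmeet a (bjoin a (bmeet a a))).
  - now rewrite babs2.
  - apply babs1.
Qed.

Lemma bmeet_rep (B : BA) (x k : B) : bmeet (bmeet x k) k = bmeet x k.
Proof. now rewrite <- bmeetA, bmeet_idem. Qed.

(* An element a/[i) of the fibre B/[i) (i in I) is represented by the    *)
(* pair (i, c) where c = a /\ i is the unique element of B below i that *)
(* is congruent to a modulo the principal filter [i).  Two elements     *)
(* a, b of B are congruent modulo [i) iff a /\ i = b /\ i.              *)
(* The index semilattice is I ordered dually to B, so the join of the   *)
(* indices i, j is the meet i /\ j in B, and the bottom index is 1.     *)
Section AB.
Variable S : bsys.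
Local Notation B := (sB S).

Definition AB_car : Type :=
  { p : B * B | sI S (fst p) /\ bmeet (snd p) (fst p) = snd p }.

Definition AB_mk (i : B) (Hi : sI S i) (a : B) : AB_car :=
  exist _ (i, bmeet a i) (conj Hi (@bmeet_rep _ a i)).

Arguments AB_mk {i} Hi a.
Definition AB_idx (x : AB_car) : B := fst (proj1_sig x).
Definition AB_rep (x : AB_car) : B := snd (proj1_sig x).
Lemma AB_idxP (x : AB_car) : sI S (AB_idx x).
Proof. exact (proj1 (proj2_sig x)). Qed.

(* Płonka sum operations: x op y = p_{i,k}(x) op_k p_{j,k}(y), k = i \/_I j,
   with p_{i,k}(a/[i)) = a/[k). *)
Definition AB_meet (x y : AB_car) : AB_car :=
  AB_mk (@sImeet S _ _ (AB_idxP x) (AB_idxP y)) (bmeet (AB_rep x) (AB_rep y)).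
Definition AB_join (x y : AB_car) : AB_car :=
  AB_mk (@sImeet S _ _ (AB_idxP x) (AB_idxP y)) (bjoin (AB_rep x) (AB_rep y)).
Definition AB_neg (x : AB_car) : AB_car :=
  AB_mk (AB_idxP x) (bneg (AB_rep x)).
(* J2 (a/[i)) = the element of the bottom fibre B/[1) below i congruent to a *)
Definition AB_j2 (x : AB_car) : AB_car :=
  AB_mk (sI1 S) (bmeet (AB_rep x) (AB_idx x)).
Definition AB_zero : AB_car := AB_mk (sI1 S) b0.
Definition AB_one : AB_car := AB_mk (sI1 S) b1.

Definition A_of_sys : alg := Alg AB_meet AB_join AB_neg AB_j2 AB_zero AB_one.
End AB.

(* The fibres are the classes of the Płonka partition function          *)
(* x . y = x /\ (x \/ y):  a ~ b  iff  a . b = a  and  b . a = b.        *)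
(* The bottom fibre A_{i0} is the fibre of the constant 0.               *)
Definition plonka (A : alg) (a b : A) : A := meet a (join a b).
Arguments plonka {A}.
Definition same_fibre (A : alg) (a b : A) : Prop :=
  plonka a b = a /\ plonka b a = b.
Arguments same_fibre {A}.
Definition fibre_top (A : alg) (t : A) : Prop :=
  forall b, same_fibre b t -> join b t = t.

Arguments fibre_top {A}.
Definition bot_car (A : alg) : Type := { a : A | same_fibre a zero }.

Section Emb.
Variables (A : alg) (X : Type) (h : A -> pow X WKe).
Hypothesis hh : @hom A (pow X WKe) h.
Hypothesis hinj : forall a b, h a = h b -> a = b.

Lemma pt_meet a b x : h (meet a b) x = wmeet (h a x) (h b x).
Proof. now rewrite (hom_meet hh). Qed.
Lemma pt_join a b x : h (join a b) x = wjoin (h a x) (h b x).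
Proof. now rewrite (hom_join hh). Qed.
Lemma pt_neg a x : h (neg a) x = wneg (h a x).
Proof. now rewrite (hom_neg hh). Qed.
Lemma pt_j2 a x : h (j2 a) x = wj2 (h a x).
Proof. now rewrite (hom_j2 hh). Qed.
Lemma pt_zero x : h zero x = W0.
Proof. now rewrite (hom_zero hh). Qed.
Lemma pt_one x : h one x = W1.
Proof. now rewrite (hom_one hh). Qed.
Lemma emb_eq a b : (forall x, h a x = h b x) -> a = b.
Proof. intro H; apply hinj; extensionality x; apply H. Qed.
Lemma pt_eq a b : a = b -> forall x, h a x = h b x.
Proof. now intros ->. Qed.
End Emb.
Arguments pt_meet {A X h} hh a b x. Arguments pt_join {A X h} hh a b x.
Arguments pt_neg {A X h} hh a x. Arguments pt_j2 {A X h} hh a x.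
Arguments pt_zero {A X h} hh x. Arguments pt_one {A X h} hh x.
Arguments emb_eq {A X h} hinj a b _. Arguments pt_eq {A X} h {a b} _ x.

Ltac pt_simpl hh :=
  unfold plonka, same_fibre in *;
  repeat progress (rewrite ?(pt_meet hh), ?(pt_join hh), ?(pt_neg hh), ?(pt_j2 hh),
          ?(pt_zero hh), ?(pt_one hh) in *).

Ltac wk_cases h x :=
  repeat match goal with
  | |- context [h ?a x] => let v := fresh "v" in set (v := h a x) in *; clearbody v; destruct v
  | H : context [h ?a x] |- _ => let v := fresh "v" in set (v := h a x) in *; clearbody v; destruct v
  end; simpl in *; try discriminate; try reflexivity; try easy.

(* Tactic: prove an equation of A pointwise, after turning the listed
   hypotheses (equations of A, or pairs of them) into pointwise facts. *)
Ltac pw hh hinj h :=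
  unfold plonka, same_fibre, fibre_top in *;
  repeat match goal with
  | H : _ /\ _ |- _ => destruct H
  end;
  apply (emb_eq hinj);
  let x := fresh "x" in
  intro x;
  repeat match goal with
  | H : @eq (car _) _ _ |- _ => generalize (pt_eq h H x); clear H
  end;
  intros;
  repeat match goal with
  | H : forall _ : _, _ |- _ => specialize (H x)
  end;
  pt_simpl hh; wk_cases h x.

Section BotBA.
Variable A : alg.
Hypothesis hA : bochvar A.

Lemma bot_meetP (a b : bot_car A) : same_fibre (meet (proj1_sig a) (proj1_sig b)) zero.
Proof.
  destruct hA as [X [h [hh hinj]]]; destruct a as [a Ha], b as [b Hb]; simpl.
  split; pw hh hinj h.
Qed.

Lemma bot_joinP (a b : bot_car A) : same_fibre (join (proj1_sig a) (proj1_sig b)) zero.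
Proof.
  destruct hA as [X [h [hh hinj]]]; destruct a as [a Ha], b as [b Hb]; simpl.
  split; pw hh hinj h.
Qed.
Lemma bot_negP (a : bot_car A) : same_fibre (neg (proj1_sig a)) zero.
Proof.
  destruct hA as [X [h [hh hinj]]]; destruct a as [a Ha]; simpl.
  split; pw hh hinj h.
Qed.
Lemma bot_zeroP : same_fibre (@zero A) zero.
Proof. destruct hA as [X [h [hh hinj]]]; split; pw hh hinj h. Qed.
Lemma bot_oneP : same_fibre (@one A) zero.
Proof. destruct hA as [X [h [hh hinj]]]; split; pw hh hinj h. Qed.

Definition bot_meet (a b : bot_car A) : bot_car A := exist (fun z => same_fibre z zero) _ (bot_meetP a b).
Definition bot_join (a b : bot_car A) : bot_car A := exist (fun z => same_fibre z zero) _ (bot_joinP a b).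
Definition bot_neg (a : bot_car A) : bot_car A := exist (fun z => same_fibre z zero) _ (bot_negP a).
Definition bot_zero : bot_car A := exist (fun z => same_fibre z zero) _ bot_zeroP.
Definition bot_one : bot_car A := exist (fun z => same_fibre z zero) _ bot_oneP.

Lemma bot_eq (a b : bot_car A) : proj1_sig a = proj1_sig b -> a = b.
Proof.
  destruct a as [a Ha], b as [b Hb]; simpl; intros ->.
  f_equal; apply proof_irrelevance.
Qed.

Ltac bot_ax :=
  intros;
  repeat match goal with a : bot_car A |- _ => destruct a end;
  apply bot_eq; simpl;
  destruct hA as [X [h [hh hinj]]]; pw hh hinj h.

Lemma bot_ax1 a b : bot_meet a b = bot_meet b a. Proof. bot_ax. Qed.
Lemma bot_ax2 a b : bot_join a b = bot_join b a. Proof. bot_ax. Qed.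
Lemma bot_ax3 a b c : bot_meet a (bot_meet b c) = bot_meet (bot_meet a b) c. Proof. bot_ax. Qed.
Lemma bot_ax4 a b c : bot_join a (bot_join b c) = bot_join (bot_join a b) c. Proof. bot_ax. Qed.
Lemma bot_ax5 a b : bot_meet a (bot_join a b) = a. Proof. bot_ax. Qed.
Lemma bot_ax6 a b : bot_join a (bot_meet a b) = a. Proof. bot_ax. Qed.
Lemma bot_ax7 a b c : bot_meet a (bot_join b c) = bot_join (bot_meet a b) (bot_meet a c).
Proof. bot_ax. Qed.
Lemma bot_ax8 a : bot_meet a bot_one = a. Proof. bot_ax. Qed.
Lemma bot_ax9 a : bot_join a bot_zero = a. Proof. bot_ax. Qed.
Lemma bot_ax10 a : bot_meet a (bot_neg a) = bot_zero. Proof. bot_ax. Qed.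
Lemma bot_ax11 a : bot_join a (bot_neg a) = bot_one. Proof. bot_ax. Qed.

Definition bot_BA : BA :=
  @MkBA (bot_car A) bot_meet bot_join bot_neg bot_zero bot_one bot_ax1 bot_ax2 bot_ax3 bot_ax4 bot_ax5 bot_ax6 bot_ax7
       bot_ax8 bot_ax9 bot_ax10 bot_ax11.

Definition Kset (k : bot_BA) : Prop :=
  exists t : A, fibre_top t /\ proj1_sig k = j2 t.

Lemma Kset1 : Kset b1.
Proof.
  exists one; split.
  - intros b Hb; destruct hA as [X [h [hh hinj]]]; pw hh hinj h.
  - simpl; destruct hA as [X [h [hh hinj]]]; pw hh hinj h.
Qed.

Lemma top_not0 (t : A) : fibre_top t -> join (join one t) t = t.
Proof.
  intro Ht; apply Ht.
  destruct hA as [X [h [hh hinj]]]; split; pw hh hinj h.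
Qed.

Lemma Ksetmeet (k l : bot_BA) : Kset k -> Kset l -> Kset (bmeet k l).
Proof.
  intros [t [Ht Hk]] [s [Hs Hl]].
  pose proof (top_not0 Ht) as Ht'. pose proof (top_not0 Hs) as Hs'.
  exists (join t s); split.
  - intros b Hb. destruct hA as [X [h [hh hinj]]].
    pose proof (pt_eq h Ht') as Pt; pose proof (pt_eq h Hs') as Ps.
    clear Ht Hs Ht' Hs' Hk Hl. pw hh hinj h.
  - destruct k as [k Hk0], l as [l Hl0]; simpl in *; subst k l.
    destruct hA as [X [h [hh hinj]]].
    pose proof (pt_eq h Ht') as Pt; pose proof (pt_eq h Hs') as Ps.
    clear Ht Hs Ht' Hs' Hk0 Hl0. pw hh hinj h.
Qed.

Definition sys_of_alg : bsys := @MkBsys bot_BA Kset Kset1 Ksetmeet.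
End BotBA.

From Stdlib Require Import ProofIrrelevance ClassicalEpsilon.

(* Every a in A lies in the fibre whose top is a \/ ~a, so it is sent to
   J2(a) in the fibre of B_A indexed by J2(a \/ ~a).  Checked pointwise in a
   power of WK^e, the map is an injective homomorphism: a coordinate of a is
   1/2 exactly where J2(a \/ ~a) vanishes, and is read off J2(a) elsewhere.
   It is onto because an element c/[J2 t) of A_{B_A} is the image of c /\ t. *)

Lemma isomorphic_sym (A B : alg) : isomorphic A B -> isomorphic B A.
Proof.
  intros [f [hf [finj fsurj]]].
  pose (g := fun b => proj1_sig (constructive_indefinite_description _ (fsurj b))).
  assert (fgK : forall b, f (g b) = b)
    by (intro b; exact (proj2_sig (constructive_indefinite_description _ (fsurj b)))).
  assert (gfK : forall a, g (f a) = a) by (intro a; apply finj, fgK).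
  exists g; split; [split | split].
  - intros a b; apply finj; now rewrite (hom_meet hf), !fgK.
  - intros a b; apply finj; now rewrite (hom_join hf), !fgK.
  - intro a; apply finj; now rewrite (hom_neg hf), !fgK.
  - intro a; apply finj; now rewrite (hom_j2 hf), !fgK.
  - apply finj; now rewrite (hom_zero hf), fgK.
  - apply finj; now rewrite (hom_one hf), fgK.
  - intros a b E; now rewrite <- (fgK a), <- (fgK b), E.
  - intro a; exists (f a); apply gfK.
Qed.

Lemma AB_eq (S : bsys) (x y : AB_car S) :
  AB_idx x = AB_idx y -> AB_rep x = AB_rep y -> x = y.
Proof.
  destruct x as [[i c] Px], y as [[j d] Py]; unfold AB_idx, AB_rep; simpl.
  intros <- <-; f_equal; apply proof_irrelevance.
Qed.

Section Decomposition.
Variable A : alg.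
Hypothesis hA : bochvar A.

Local Notation BA_A := (sys_of_alg hA).
Local Notation bot := (bot_BA hA).

Ltac pointwise := let X := fresh "X" in let h := fresh "h" in
  let hh := fresh "hh" in let hinj := fresh "hinj" in
  pose proof hA as [X [h [hh hinj]]]; pw hh hinj h.

Lemma fibre_top_join_neg (a : A) : fibre_top (join a (neg a)).
Proof. intros b Hb; pointwise. Qed.

Lemma join_neg_of_fibre_top (t : A) : fibre_top t -> join t (neg t) = t.
Proof.
  intro Ht.
  assert (E : join (neg t) t = t) by (apply Ht; split; pointwise).
  clear Ht; pointwise.
Qed.

Lemma same_fibre_j2_zero (a : A) : same_fibre (j2 a) zero.
Proof. split; pointwise. Qed.

Definition bot_j2 (a : A) : bot := exist _ (j2 a) (same_fibre_j2_zero a).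

Definition fibre_index (a : A) : bot := bot_j2 (join a (neg a)).

Lemma Kset_fibre_index (a : A) : @Kset A hA (fibre_index a).
Proof. exists (join a (neg a)); split; [apply fibre_top_join_neg | reflexivity]. Qed.

Definition decompose (a : A) : A_of_sys BA_A :=
  AB_mk BA_A (fibre_index a) (Kset_fibre_index a) (bot_j2 a).

Ltac AB_simpl :=
  cbn [meet join neg j2 zero one A_of_sys decompose fibre_index bot_j2
       AB_idx AB_rep AB_mk AB_meet AB_join AB_neg AB_j2 AB_zero AB_one
       proj1_sig fst snd sB sys_of_alg bot_BA bmeet bjoin bneg b0 b1
       bot_meet bot_join bot_neg bot_zero bot_one].

Lemma decompose_hom : hom A (A_of_sys BA_A) decompose.
Proof. split; intros; apply AB_eq; apply bot_eq; AB_simpl; pointwise. Qed.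

Lemma decompose_inj (a b : A) : decompose a = decompose b -> a = b.
Proof.
  intro E.
  assert (Ei : j2 (join a (neg a)) = j2 (join b (neg b)))
    by exact (f_equal (fun x : AB_car BA_A => proj1_sig (AB_idx x)) E).
  assert (Ec : meet (j2 a) (j2 (join a (neg a))) = meet (j2 b) (j2 (join b (neg b))))
    by exact (f_equal (fun x : AB_car BA_A => proj1_sig (AB_rep x)) E).
  clear E; pointwise.
Qed.

Lemma decompose_surj (x : A_of_sys BA_A) : exists a, decompose a = x.
Proof.
  destruct x as [[[i Hi] [c Hc]] [HK Hci]]; cbn in HK, Hci.
  pose proof HK as [t [Ht Eit]]; cbn in Eit.
  pose proof (join_neg_of_fibre_top t Ht) as Et.
  pose proof (f_equal (@proj1_sig _ _) Hci) as Ec; cbn in Ec.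
  exists (meet c t); apply AB_eq; apply bot_eq; AB_simpl; clear HK Ht Hci; pointwise.
Qed.

End Decomposition.

Theorem theorem3p5 (A : alg) (hA : bochvar A) :
  isomorphic (A_of_sys (@sys_of_alg A hA)) A.
Proof.
  apply isomorphic_sym.
  exists (decompose A hA); split; [apply decompose_hom | split].
  - apply decompose_inj.
  - apply decompose_surj.
Qed.
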